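(* Let $G_1$ ($n\times k$) and $G_0$ ($n\times l$) be fixed binary matrices with $\widetilde G=[G_1\ G_0]$ of full column rank, let $\mathbf m\in\{0,1\}^k$ be fixed, and let $t_1=\lfloor (d_1-1)/2\rfloor$. On the binary defect and symmetric channel with two-step encoding and any decoder satisfying the bounded-distance property described in the context, $$P(\widehat{\mathbf m}\neq\mathbf m)\le\sum_{u=d_0}^{n}\left\{\binom nu\beta^u(1-\beta)^{n-u}\min\left\{\frac{\sum_{w=d_0}^{u}B_{0,w}\binom{n-w}{u-w}}{\binom nu},1\right\}\sum_{t=\max(0,\,t_1+d_0-u)}^{n}\binom nt p^t(1-p)^{n-t}\right\}+\sum_{t=t_1+1}^{n}\binom nt p^t(1-p)^{n-t}.$$
   Context: All arithmetic is over $\mathrm{GF}(2)$. $\mathcal C_0^{\perp}=\{\mathbf x\in\{0,1\}^n: G_0^T\mathbf x=\mathbf 0\}$; $B_{0,w}$ is its number of vectors of Hamming weight $w$ and $d_0$ its minimum nonzero weight. $d_1$ is the minimum Hamming weight of $G_1\mathbf m'+G_0\mathbf d'$ over all $\mathbf m'\neq\mathbf 0$, $\mathbf d'\in\{0,1\}^l$. Binary defect and symmetric channel (BDSC) with parameters $(\beta,p)$: each of the $n$ cells is independently defective with probability $\beta$; a defective cell is stuck at $0$ or $1$, each with probability $1/2$, independently; $\mathcal U$ is the set of defects, $U=|\mathcal U|$, $\mathbf s$ the stuck-at values. Writing codeword $\mathbf c$ stores $\mathbf c\circ\mathbf s$, where $(\mathbf c\circ\mathbf s)_i=s_i$ for $i\in\mathcal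 U$ and $c_i$ otherwise; the read vector is $\mathbf y=\mathbf c\circ\mathbf s+\mathbf z$, with $\mathbf z$ having i.i.d. $\mathrm{Bernoulli}(p)$ entries independent of the defects. For a matrix/vector, superscript $\mathcal A$ denotes the rows indexed by $\mathcal A$. Two-step encoding: let $\mathbf b^{\mathcal U}=(G_1\mathbf m)^{\mathcal U}+\mathbf s^{\mathcal U}$. Step 1: if $G_0^{\mathcal U}\mathbf d=\mathbf b^{\mathcal U}$ has a solution $\mathbf d$, use it ($E=1$). Otherwise ($E=0$; this requires $U\ge d_0$), Step 2: choose any $\mathcal U'\subseteq\mathcal U$ with $|\mathcal U'|=d_0-1$ and take $\mathbf d$ solving $G_0^{\mathcal U'}\mathbf d=\mathbf b^{\mathcal U'}$ (such a solution always exists since any $d_0-1$ rows of $G_0$ are linearly independent). The stored codeword is $\mathbf c=G_1\mathbf m+G_0\mathbf d$. Decoder: any map $\mathbf y\mapsto\widehat{\mathbf m}$ such that $\widehat{\mathbf m}=\mathbf m$ whenever $\mathbf y$ and $\mathbf c$ differ in at most $t_1$ positions (e.g. bounded-distance decoding of the code generated by $\widetilde G$). *)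

From HB Require Import structures.
From mathcomp Require Import all_boot all_order all_algebra.
Set Implicit Arguments. Unset Strict Implicit. Unset Printing Implicit Defensive.
Import Order.TTheory GRing.Theory Num.Theory.
Local Open Scope ring_scope.

Notation bvec n := 'cV['F_2]_n.

Definition wt n (x : bvec n) : nat := #|[set i : 'I_n | x i 0 != 0]|.

Definition dual_code n l (G0 : 'M['F_2]_(n, l)) : {set bvec n} :=
  [set x : bvec n | G0^T *m x == 0].

Definition B0 n l (G0 : 'M['F_2]_(n, l)) (w : nat) : nat :=
  #|[set x in dual_code G0 | wt x == w]|.

(* d_0: minimum nonzero weight of C0^perp (n+1 if C0^perp = {0}). *)
Definition d0 n l (G0 : 'M['F_2]_(n, l)) : nat :=
  \big[minn/n.+1]_(x in dual_code G0 | x != 0) wt x.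

(* d_1: min weight of G1 m' + G0 d' over m' <> 0 (n+1 if k = 0). *)
Definition d1 n k l (G1 : 'M['F_2]_(n, k)) (G0 : 'M['F_2]_(n, l)) : nat :=
  \big[minn/n.+1]_(md : bvec k * bvec l | md.1 != 0)
     wt (G1 *m md.1 + G0 *m md.2).

Definition rows_solve n l (A : {set 'I_n}) (G0 : 'M['F_2]_(n, l))
  (d : bvec l) (b : bvec n) : Prop :=
  forall i, i \in A -> (G0 *m d) i 0 = b i 0.

Definition two_step_encoder n k l (G1 : 'M['F_2]_(n, k)) (G0 : 'M['F_2]_(n, l))
  (m : bvec k) (enc : {set 'I_n} -> bvec n -> bvec l) : Prop :=
  forall (U : {set 'I_n}) (s : bvec n),
    let b := G1 *m m + s in
    ((exists d, rows_solve U G0 d b) -> rows_solve U G0 (enc U s) b) /\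
    (~ (exists d, rows_solve U G0 d b) ->
       exists2 U' : {set 'I_n}, (U' \subset U) && (#|U'| == (d0 G0).-1)
                              & rows_solve U' G0 (enc U s) b).

Definition stuck n (U : {set 'I_n}) (c s : bvec n) : bvec n :=
  \col_i (if i \in U then s i 0 else c i 0).

(* Probability of decoding error on the BDSC(beta,p):
   sum over defect sets U, stuck values s (on U; zero off U, uniform on U)
   and noise vectors z. *)
Definition err_prob (R : realFieldType) n k l
  (G1 : 'M['F_2]_(n, k)) (G0 : 'M['F_2]_(n, l)) (m : bvec k)
  (enc : {set 'I_n} -> bvec n -> bvec l) (dec : bvec n -> bvec k)
  (beta p : R) : R :=
  \sum_(U : {set 'I_n})
   \sum_(s : bvec n | [forall i, (i \notin U) ==> (s i 0 == 0)])
   \sum_(z : bvec n)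
     (beta ^+ #|U| * (1 - beta) ^+ (n - #|U|) * (2%:R ^- #|U|)
      * (p ^+ wt z * (1 - p) ^+ (n - wt z))
      * (dec (stuck U (G1 *m m + G0 *m enc U s) s + z) != m)%:R).

From HB Require Import structures.
From mathcomp Require Import all_boot all_order all_algebra.
From mathcomp Require Import zify ring.
From Stdlib Require Import Classical_Prop.
Set Implicit Arguments. Unset Strict Implicit. Unset Printing Implicit Defensive.
Import Order.TTheory GRing.Theory Num.Theory.
Local Open Scope ring_scope.

(* If Step 1 succeeds, the stored word is the codeword itself, so decoding can
   only fail when the noise has weight above t1.  If Step 1 fails, the system
   restricted to the rows in U is unsolvable, so some nonzero word of C0^perp
   is supported inside U (in particular |U| >= d0); Step 2 makes the stored
   word agree with the codeword on U', so the two differ in at most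
   |U| - d0 + 1 positions and decoding can only fail when the noise has weight
   at least t1 + d0 - |U|.  Averaging over the stuck values, the bound follows
   once the number of defect sets of size u containing the support of a
   nonzero dual codeword is bounded both by C(n, u) and, by the union bound,
   by sum_w B_{0,w} C(n - w, u - w). *)

Definition supp n (x : bvec n) : {set 'I_n} := [set i | x i 0 != 0].

Definition indicator_vec n (A : {set 'I_n}) : bvec n := \col_i (i \in A)%:R.

Lemma F2_neq0 (a : 'F_2) : a != 0 -> a = 1.
Proof. by case: a => [[|[|?]] ?] //= _; apply/val_inj. Qed.

Lemma F2_addrr (a : 'F_2) : a + a = 0.
Proof. by apply: addrr_pchar2; apply: pchar_Fp. Qed.

Lemma supp_indicator_vec n (A : {set 'I_n}) : supp (indicator_vec A) = A.
Proof.
by apply/setP=> i; rewrite !inE mxE; case: (i \in A); rewrite ?eqxx ?oner_eq0.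
Qed.

Lemma indicator_vec_supp n (x : bvec n) : indicator_vec (supp x) = x.
Proof.
apply/matrixP=> i j; rewrite !mxE inE (ord1 j).
by case: eqP => [->|/eqP/F2_neq0 ->].
Qed.

Lemma indicator_vec_bij n : bijective (@indicator_vec n).
Proof. by exists (@supp n); [apply: supp_indicator_vec | apply: indicator_vec_supp]. Qed.

Lemma wt_supp n (x : bvec n) : wt x = #|supp x|.
Proof. by []. Qed.

Lemma wt_indicator_vec n (A : {set 'I_n}) : wt (indicator_vec A) = #|A|.
Proof. by rewrite wt_supp supp_indicator_vec. Qed.

Lemma leq_wtD n (x y : bvec n) : (wt (x + y) <= wt x + wt y)%N.
Proof.
apply: leq_trans (leq_card_setU _ _); apply: subset_leq_card.
apply/subsetP=> i; rewrite !inE mxE; apply: contraR.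
by rewrite negb_or !negbK => /andP[/eqP-> /eqP->]; rewrite addr0.
Qed.

Lemma card_stuck_values n (U : {set 'I_n}) :
  #|[pred s : bvec n | [forall i, (i \notin U) ==> (s i 0 == 0)]]| = (2 ^ #|U|)%N.
Proof.
rewrite -card_powerset -(card_imset _ (bij_inj (indicator_vec_bij n))).
apply: eq_card => s; rewrite inE; apply/forallP/imsetP => [s_U | [A]].
  exists (supp s); last by rewrite indicator_vec_supp.
  rewrite inE; apply/subsetP=> i; rewrite inE; apply: contraR => iU.
  by rewrite (implyP (s_U i) iU).
rewrite inE => /subsetP AU -> i; apply/implyP => iU.
by rewrite mxE; case: (boolP (i \in A)) => // /AU; rewrite (negbTE iU).
Qed.

Lemma sum_set_by_card (R : nmodType) n (F : {set 'I_n} -> R) :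
  \sum_(A : {set 'I_n}) F A = \sum_(u < n.+1) \sum_(A : {set 'I_n} | #|A| == u) F A.
Proof.
rewrite (partition_big (fun A : {set 'I_n} => inord #|A| : 'I_n.+1) predT) //=.
apply: eq_bigr => u _; apply: eq_bigl => A.
by rewrite -val_eqE /= inordK // ltnS -[n in (_ <= n)%N]card_ord max_card.
Qed.

Lemma sum_card_set (R : pzSemiRingType) n (f : nat -> R) :
  \sum_(A : {set 'I_n}) f #|A| = \sum_(t < n.+1) 'C(n, t)%:R * f t.
Proof.
rewrite sum_set_by_card; apply: eq_bigr => t _.
rewrite (eq_bigr (fun=> f t)) => [|A /eqP -> //].
rewrite sumr_const mulr_natl -[n in 'C(n, _)]card_ord -card_draws.
by apply: congr1; apply: eq_card => A; rewrite inE.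
Qed.

Lemma sum_wt (R : pzSemiRingType) n (f : nat -> R) :
  \sum_(z : bvec n) f (wt z) = \sum_(t < n.+1) 'C(n, t)%:R * f t.
Proof.
rewrite (reindex (@indicator_vec n) (onW_bij _ (indicator_vec_bij n))) /= -sum_card_set.
by apply: eq_bigr => A _; rewrite wt_indicator_vec.
Qed.

Lemma sum_binomial_distr (R : comPzRingType) n (b : R) :
  \sum_(A : {set 'I_n}) b ^+ #|A| * (1 - b) ^+ (n - #|A|) = 1.
Proof.
rewrite (@sum_card_set _ n (fun t => b ^+ t * (1 - b) ^+ (n - t))).
transitivity ((1 - b + b) ^+ n); last by rewrite subrK expr1n.
by rewrite exprDn; apply: eq_bigr => t _; rewrite mulr_natl mulrC.
Qed.

Definition noise_tail (R : pzRingType) n (p : R) (a : nat) : R :=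
  \sum_(a <= t < n.+1) 'C(n, t)%:R * p ^+ t * (1 - p) ^+ (n - t).

Lemma sum_wt_tail (R : pzRingType) n (p : R) (a : nat) :
  \sum_(z : bvec n) p ^+ wt z * (1 - p) ^+ (n - wt z) * (a <= wt z)%:R =
  noise_tail n p a.
Proof.
rewrite (@sum_wt _ n (fun t => p ^+ t * (1 - p) ^+ (n - t) * (a <= t)%:R)).
rewrite /noise_tail big_geq_mkord [RHS]big_mkcond; apply: eq_bigr => t _.
by case: (a <= t)%N; rewrite ?mulr1 ?mulr0 ?mulrA.
Qed.

Lemma mul_row_rowsub1 (R : pzSemiRingType) m n (f : 'I_m -> 'I_n) (v : 'rV[R]_m) j :
  (v *m rowsub f 1%:M) 0 j = \sum_(i | f i == j) v 0 i.
Proof.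
rewrite [LHS]mxE [RHS]big_mkcond /=; apply: eq_bigr => i _.
by rewrite !mxE; case: (f i == j); rewrite ?mulr1 ?mulr0.
Qed.

(* Either the rows of G0 indexed by U are independent, and then every
   right-hand side is attained on U, or a nonzero vector of their left kernel,
   spread back to length n, is a dual codeword supported in U. *)
Lemma unsolvable_dual_support n l (G0 : 'M['F_2]_(n, l)) (U : {set 'I_n}) b :
  ~ (exists d, rows_solve U G0 d b) ->
  exists2 x : bvec n, (x \in dual_code G0) && (x != 0) & supp x \subset U.
Proof.
move=> no_sol; pose f : 'I_#|U| -> 'I_n := enum_val.
have [/row_freeP [N HN] | ] := boolP (row_free (rowsub f G0)).
  case: no_sol; exists (N *m rowsub f b) => i iU.
  have : rowsub f (G0 *m (N *m rowsub f b)) = rowsub f b.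
    by rewrite -mul_rowsub_mx mulmxA HN mul1mx.
  by move/matrixP/(_ (enum_rank_in iU i) 0); rewrite !mxE /f (enum_rankK_in iU iU).
rewrite -kermx_eq0 => /rowV0Pn [v /sub_kermxP v_ker v_neq0].
exists (v *m rowsub f 1%:M)^T; last first.
  apply/subsetP=> j; rewrite inE mxE mul_row_rowsub1; apply: contraR => jU.
  rewrite big_pred0 // => i; apply: contraNF jU => /eqP <-; exact: enum_valP.
apply/andP; split.
  by rewrite inE -trmx_mul -mulmxA -rowsubE v_ker trmx0.
apply: contra v_neq0 => /eqP /(congr1 trmx); rewrite trmxK trmx0 => vP0.
apply/eqP/rowP => i; rewrite mxE.
have := mul_row_rowsub1 f v (f i); rewrite vP0 mxE (big_pred1 i) => [/esym // | k].
by rewrite /= (inj_eq enum_val_inj).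
Qed.

Lemma wt_stuck_sub n l (G0 : 'M['F_2]_(n, l)) (U V : {set 'I_n}) g d s :
  rows_solve V G0 d (g + s) ->
  (wt (stuck U (g + G0 *m d) s - (g + G0 *m d)) <= #|U :\: V|)%N.
Proof.
move=> d_solves; set c := g + G0 *m d.
have agree i : i \in V -> c i 0 = s i 0.
  by move=> iV; rewrite mxE (d_solves i iV) mxE addrA F2_addrr add0r.
clearbody c; apply: subset_leq_card; apply/subsetP => i; rewrite !inE !mxE.
case: (boolP (i \in U)) => iU; last by rewrite subrr eqxx.
by apply: contraR; rewrite andbT negbK => /agree ->; rewrite subrr.
Qed.

Definition covers_dual n l (G0 : 'M['F_2]_(n, l)) (U : {set 'I_n}) : bool :=
  [exists x : bvec n, [&& x \in dual_code G0, x != 0 & supp x \subset U]].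

Lemma d0_le_wt n l (G0 : 'M['F_2]_(n, l)) x :
  x \in dual_code G0 -> x != 0 -> (d0 G0 <= wt x)%N.
Proof.
move=> xd xn0; rewrite /d0 -minEnat.
have := @bigmin_le_cond _ nat _ n.+1 x (fun y => (y \in dual_code G0) && (y != 0)) (@wt n).
by rewrite xd xn0; apply.
Qed.

Section DecodingError.
Variables (n k l : nat) (G1 : 'M['F_2]_(n, k)) (G0 : 'M['F_2]_(n, l)) (m : bvec k).
Variables (enc : {set 'I_n} -> bvec n -> bvec l) (dec : bvec n -> bvec k) (t1 : nat).
Hypothesis enc_spec : two_step_encoder G1 G0 m enc.
Hypothesis dec_spec : forall (d : bvec l) (y : bvec n),
  (wt (y - (G1 *m m + G0 *m d)) <= t1)%N -> dec y = m.

Lemma decoding_error_event U s z :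
  dec (stuck U (G1 *m m + G0 *m enc U s) s + z) != m ->
  (covers_dual G0 U && (t1 + d0 G0 - #|U| <= wt z)%N) || (t1 < wt z)%N.
Proof.
move=> err; have [step1 step2] := enc_spec U s.
have dist_le V : rows_solve V G0 (enc U s) (G1 *m m + s) ->
    (wt (z + (stuck U (G1 *m m + G0 *m enc U s) s - (G1 *m m + G0 *m enc U s)))
      <= wt z + #|U :\: V|)%N.
  by move=> V_solves; apply: leq_trans (leq_wtD _ _) _; rewrite leq_add2l wt_stuck_sub.
have decodes V : rows_solve V G0 (enc U s) (G1 *m m + s) ->
    (wt z + #|U :\: V| <= t1)%N -> False.
  move=> V_solves le_t1; case/eqP: err; apply: (@dec_spec (enc U s)).
  by rewrite addrAC addrC; apply: leq_trans (dist_le V V_solves) le_t1.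
have [_ | light] := ltnP t1 (wt z); first by rewrite orbT.
have [sol | no_sol] := classic (exists d, rows_solve U G0 d (G1 *m m + s)).
  by case: (decodes U (step1 sol)); rewrite setDv cards0 addn0 light.
have [x /andP[xd xn0] xU] := unsolvable_dual_support no_sol.
have [U' /andP[U'U /eqP card_U'] U'_solves] := step2 no_sol.
rewrite orbF; apply/andP; split; first by apply/existsP; exists x; rewrite xd xn0.
rewrite leqNgt; apply/negP => lt_t1; apply: (decodes U' U'_solves).
have := subset_leq_card U'U; rewrite cardsD (setIidPr U'U) card_U'.
move: lt_t1; rewrite -subn1; lia.
Qed.
End DecodingError.

Lemma sum_boolE (T : finType) (P Q : pred T) :
  (\sum_(x | P x) Q x)%N = #|[set x | P x && Q x]|.
Proof. by rewrite -sum1dep_card big_mkcondr; apply: eq_bigr => x _; case: (Q x). Qed.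

Lemma card_supersets_le (T : finType) (A : {set T}) u :
  (#|[set U : {set T} | A \subset U & #|U| == u]| <= 'C(#|T| - #|A|, u - #|A|))%N.
Proof.
set S := [set U : {set T} | _].
have diff_inj : {in S &, injective (fun U => U :\: A)}.
  move=> U1 U2; rewrite !inE => /andP[AU1 _] /andP[AU2 _] eqD.
  by rewrite -(setID U1 A) -(setID U2 A) (setIidPr AU1) (setIidPr AU2) eqD.
rewrite -(card_in_imset diff_inj) -(cardsC A) addKn -cards_draws.
apply: subset_leq_card; apply/subsetP => V /imsetP[U].
rewrite /S inE => /andP[AU /eqP <-] ->.
by rewrite inE subsetDr cardsD (setIidPr AU) eqxx.
Qed.

Lemma covers_dual_sum_le n l (G0 : 'M['F_2]_(n, l)) u :
  (\sum_(U : {set 'I_n} | #|U| == u) covers_dual G0 U <=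
   \sum_(d0 G0 <= w < u.+1) B0 G0 w * 'C(n - w, u - w))%N.
Proof.
pose D x := (x \in dual_code G0) && (x != 0).
have union_bound U : (covers_dual G0 U <= \sum_(x | D x) (supp x \subset U))%N.
  case/boolP: (covers_dual G0 U) => // /existsP[x /and3P[xd xn0 xU]].
  by rewrite (bigD1 x) /D ?xd ?xn0 //= xU.
have per_word x : D x -> (\sum_(U : {set 'I_n} | #|U| == u) (supp x \subset U) <=
    \sum_(d0 G0 <= w < u.+1) (wt x == w) * 'C(n - w, u - w))%N.
  case/andP=> xd xn0; have [xu | ux] := leqP (wt x) u; last first.
    rewrite big1 // => U /eqP cardU; apply/eqP; rewrite eqb0; apply: contraTN ux.
    by move/subset_leq_card; rewrite -wt_supp cardU -leqNgt.
  rewrite (bigD1_seq (wt x)) ?mem_index_iota ?d0_le_wt ?iota_uniq //= eqxx mul1n.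
  apply: leq_trans (leq_addr _ _); rewrite sum_boolE wt_supp -[n in 'C(n - _, _)]card_ord.
  by apply: leq_trans (card_supersets_le _ u); apply: subset_leq_card;
    apply/subsetP => U; rewrite !inE andbC.
apply: (@leq_trans (\sum_(U : {set 'I_n} | #|U| == u) \sum_(x | D x) (supp x \subset U))).
  exact: leq_sum.
rewrite exchange_big /=.
apply: (@leq_trans (\sum_(x | D x) \sum_(d0 G0 <= w < u.+1) (wt x == w) * 'C(n - w, u - w))).
  exact: leq_sum.
rewrite exchange_big /=.
apply: leq_sum => w _; rewrite -big_distrl leq_mul2r sum_boolE /B0; apply/orP; right.
by apply: subset_leq_card; apply/subsetP => x; rewrite !inE /D inE => /andP[/andP[-> _] ->].
Qed.

Lemma le_mul_min (R : realFieldType) (x y c : R) :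
  0 < c -> x <= y -> x <= c -> x <= c * Num.min (y / c) 1.
Proof.
move=> c_gt0 le_xy le_xc; rewrite -ler_pdivrMl // le_min; apply/andP; split.
  by rewrite mulrC ler_pM2r ?invr_gt0.
by rewrite ler_pdivrMl ?mulr1.
Qed.

Lemma covers_dual_count_le (R : realFieldType) n l (G0 : 'M['F_2]_(n, l)) u :
  (u <= n)%N ->
  (\sum_(U : {set 'I_n} | #|U| == u) covers_dual G0 U)%:R <= 'C(n, u)%:R *
    Num.min ((\sum_(d0 G0 <= w < u.+1) (B0 G0 w * 'C(n - w, u - w))%:R) / 'C(n, u)%:R) 1
    :> R.
Proof.
move=> le_un; apply: le_mul_min; first by rewrite ltr0n bin_gt0.
  by rewrite -natr_sum ler_nat covers_dual_sum_le.
rewrite ler_nat sum_boolE -[n in 'C(n, _)]card_ord -card_draws.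
by apply: subset_leq_card; apply/subsetP => U; rewrite !inE => /andP[].
Qed.

Lemma err_prob_le_covers (R : realFieldType) n k l (G1 : 'M['F_2]_(n, k))
    (G0 : 'M['F_2]_(n, l)) m enc dec (beta p : R) t1 :
  0 <= beta <= 1 -> 0 <= p <= 1 -> two_step_encoder G1 G0 m enc ->
  (forall (d : bvec l) (y : bvec n),
      (wt (y - (G1 *m m + G0 *m d)) <= t1)%N -> dec y = m) ->
  err_prob G1 G0 m enc dec beta p <=
  \sum_(U : {set 'I_n}) beta ^+ #|U| * (1 - beta) ^+ (n - #|U|) *
    ((covers_dual G0 U)%:R * noise_tail n p (t1 + d0 G0 - #|U|) + noise_tail n p t1.+1).
Proof.
move=> /andP[beta_ge0 beta_le1] /andP[p_ge0 p_le1] enc_spec dec_spec.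
apply: ler_sum => U _; set u := #|U|.
set w := beta ^+ u * (1 - beta) ^+ (n - u) * 2%:R ^- u.
set cov := (covers_dual G0 U)%:R.
have w_ge0 : 0 <= w by rewrite !mulr_ge0 ?invr_ge0 ?exprn_ge0 ?subr_ge0 ?ler0n.
have err_le s z : (dec (stuck U (G1 *m m + G0 *m enc U s) s + z) != m)%:R <=
    cov * (t1 + d0 G0 - u <= wt z)%:R + (t1.+1 <= wt z)%:R :> R.
  case: (boolP (dec _ != m)) => [/(decoding_error_event enc_spec dec_spec) | _].
    by case/orP => [/andP[cU ->] | ->]; rewrite /cov ?cU ?mul1r ?lerDl ?lerDr ?mulr_ge0 ?ler0n.
  by rewrite addr_ge0 ?mulr_ge0 ?ler0n.
apply: (@le_trans _ _ (\sum_(s : bvec n | [forall i, (i \notin U) ==> (s i 0 == 0)])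
    \sum_(z : bvec n) w * (p ^+ wt z * (1 - p) ^+ (n - wt z) *
      (cov * (t1 + d0 G0 - u <= wt z)%:R + (t1.+1 <= wt z)%:R)))).
  apply: ler_sum => s _; apply: ler_sum => z _; rewrite -mulrA ler_wpM2l //.
  by rewrite ler_wpM2l ?err_le // mulr_ge0 ?exprn_ge0 ?subr_ge0.
rewrite (eq_bigr (fun=> w * (cov * noise_tail n p (t1 + d0 G0 - u) + noise_tail n p t1.+1)));
  last by move=> s _; rewrite -!sum_wt_tail mulr_sumr -big_split /= mulr_sumr;
    apply: eq_bigr => z _; ring.
rewrite sumr_const (_ : #|_| = 2 ^ u)%N; last first.
  by rewrite -(card_stuck_values U); apply: eq_card.
rewrite -mulr_natr natrX /w le_eqVlt; apply/orP; left; apply/eqP.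
by field; rewrite expf_neq0 // pnatr_eq0.
Qed.

Lemma noise_tail_ge0 (R : realFieldType) n (p : R) a :
  0 <= p <= 1 -> 0 <= noise_tail n p a.
Proof.
case/andP=> p_ge0 p_le1; apply: sumr_ge0 => t _.
by rewrite !mulr_ge0 ?ler0n ?exprn_ge0 ?subr_ge0.
Qed.

Lemma sum_covers_dual_le (R : realFieldType) n l (G0 : 'M['F_2]_(n, l)) (f : nat -> R) :
  (forall u, 0 <= f u) ->
  \sum_(U : {set 'I_n}) f #|U| * (covers_dual G0 U)%:R <=
  \sum_(d0 G0 <= u < n.+1) 'C(n, u)%:R *
    Num.min ((\sum_(d0 G0 <= w < u.+1) (B0 G0 w * 'C(n - w, u - w))%:R) / 'C(n, u)%:R) 1
    * f u.
Proof.
move=> f_ge0; rewrite sum_set_by_card big_geq_mkord [X in _ <= X]big_mkcond /=.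
apply: ler_sum => u _; have le_un : (u <= n)%N by rewrite -ltnS.
rewrite (eq_bigr (fun U => f u * (covers_dual G0 U)%:R)) => [|U /eqP -> //].
rewrite -mulr_sumr -natr_sum mulrC; case: leqP => [_ | lt_u].
  by apply: ler_wpM2r; [exact: f_ge0 | exact: covers_dual_count_le].
have := covers_dual_sum_le G0 u; rewrite big_geq // leqn0 => /eqP ->.
by rewrite mul0r.
Qed.

Theorem theorem5 (R : realFieldType) (n k l : nat)
  (G1 : 'M['F_2]_(n, k)) (G0 : 'M['F_2]_(n, l)) (m : 'cV['F_2]_k)
  (beta p : R)
  (enc : {set 'I_n} -> 'cV['F_2]_n -> 'cV['F_2]_l)
  (dec : 'cV['F_2]_n -> 'cV['F_2]_k) :
  \rank (row_mx G1 G0) = (k + l)%N ->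
  0 <= beta <= 1 -> 0 <= p <= 1 ->
  two_step_encoder G1 G0 m enc ->
  (forall (d : 'cV['F_2]_l) (y : 'cV['F_2]_n),
      (wt (y - (G1 *m m + G0 *m d)) <= (d1 G1 G0).-1./2)%N -> dec y = m) ->
  let t1 := (d1 G1 G0).-1./2 in
  let dd0 := d0 G0 in
  err_prob G1 G0 m enc dec beta p <=
    \sum_(dd0 <= u < n.+1)
      ('C(n, u)%:R * beta ^+ u * (1 - beta) ^+ (n - u)
       * Num.min ((\sum_(dd0 <= w < u.+1) (B0 G0 w * 'C(n - w, u - w))%:R)
                    / 'C(n, u)%:R) 1
       * \sum_((t1 + dd0 - u)%N <= t < n.+1)
           'C(n, t)%:R * p ^+ t * (1 - p) ^+ (n - t))
    + \sum_(t1.+1 <= t < n.+1) 'C(n, t)%:R * p ^+ t * (1 - p) ^+ (n - t).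
Proof.
move=> _ beta01 p01 enc_spec dec_spec; cbv zeta; set t1 := (d1 G1 G0).-1./2.
apply: le_trans (err_prob_le_covers beta01 p01 enc_spec dec_spec) _.
rewrite (eq_bigr _ (fun U _ => mulrDr _ _ _)) big_split /= -mulr_suml.
rewrite sum_binomial_distr mul1r lerD2r.
pose f u := beta ^+ u * (1 - beta) ^+ (n - u) * noise_tail n p (t1 + d0 G0 - u).
have f_ge0 u : 0 <= f u.
  case/andP: beta01 => beta_ge0 beta_le1.
  by rewrite !mulr_ge0 ?exprn_ge0 ?subr_ge0 ?noise_tail_ge0.
rewrite (eq_bigr (fun U : {set 'I_n} => f #|U| * (covers_dual G0 U)%:R)); last by move=> U _; rewrite /f; ring.
apply: le_trans (sum_covers_dual_le G0 f_ge0) _; rewrite le_eqVlt; apply/orP; left.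
by apply/eqP; apply: eq_bigr => u _; rewrite /f /noise_tail; ring.
Qed.
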